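(* Let $X$ be a normed linear space, $F:X\rightrightarrows\mathbb{R}^p$, $(x,y)\in\mathrm{gph}F$, with $F$ Lipschitz around $x$ and $y\in\mathcal{PE}(F(x),P)$, and let $S$ be a nonempty compact subset of $X\times\mathbb{R}^p$. Assume $$0\in\mathcal{E}\Big(\mathrm{cl}\Big(\bigcup_{(v,w)\in S}\big(w+D_\uparrow F((x,y);v)\big)\Big),P\Big)+P.$$ Then there exists $(v,w)\in S$ such that $-w\in DF_\uparrow((x,y);v)$.
   Context: $P\subset\mathbb{R}^p$ is a closed convex pointed cone containing $0$ with nonempty interior; $F_\uparrow(x)=F(x)+P$. $\mathcal{E}(S,P)=\{y\in S:(y-P)\cap S=\{y\}\}$; contingent cone $T_S(z)=\{v:\exists h_k\to0^+,\exists v_k\to v,z+h_kv_k\in S\}$; $\mathcal{PE}(S,P)=\{y\in\mathcal{E}(S,P):T_{S+P}(y)\cap(-P)=\{0\}\}$. $F$ is Lipschitz around $x$ if there are $l>0$ and a neighborhood $\mathcal{O}$ of $x$ with $F(x_1)\subset F(x_2)+l\|x_1-x_2\|\mathbf{B}$ for $x_1,x_2\in\mathcal{O}$. Contingent derivative $DF(x,y)$: graph $T_{\mathrm{gph}F}(x,y)$, value at $v$ written $DF((x,y);v)$. Generalized contingent epiderivative: $D_\uparrow F((x,y);v)=\mathcal{E}(DF_\uparrow((x,y);v),P)$ (empty if no minimal element exists). *)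

From Stdlib Require Import Reals Lra.
From Stdlib Require Vectors.Fin.
Open Scope R_scope.

Record NormedSpace := {
  ns_car :> Type;
  ns_zero : ns_car;
  ns_add : ns_car -> ns_car -> ns_car;
  ns_opp : ns_car -> ns_car;
  ns_scal : R -> ns_car -> ns_car;
  ns_norm : ns_car -> R;
  ns_add_assoc : forall a b c, ns_add a (ns_add b c) = ns_add (ns_add a b) c;
  ns_add_comm : forall a b, ns_add a b = ns_add b a;
  ns_add_zero : forall a, ns_add a ns_zero = a;
  ns_add_opp : forall a, ns_add a (ns_opp a) = ns_zero;
  ns_scal_assoc : forall s t a, ns_scal s (ns_scal t a) = ns_scal (s * t) a;
  ns_scal_one : forall a, ns_scal 1 a = a;
  ns_scal_distr_l : forall t a b, ns_scal t (ns_add a b) = ns_add (ns_scal t a) (ns_scal t b);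
  ns_scal_distr_r : forall s t a, ns_scal (s + t) a = ns_add (ns_scal s a) (ns_scal t a);
  ns_norm_eq0 : forall a, ns_norm a = 0 -> a = ns_zero;
  ns_norm_scal : forall t a, ns_norm (ns_scal t a) = Rabs t * ns_norm a;
  ns_norm_triangle : forall a b, ns_norm (ns_add a b) <= ns_norm a + ns_norm b
}.

Definition ns_dist (X : NormedSpace) (a b : X) : R :=
  ns_norm X (ns_add X a (ns_opp X b)).

(** * R^p, with the max norm (all norms on R^p are equivalent) *)
Definition Rp (p : nat) : Type := Fin.t p -> R.

Fixpoint fmax (n : nat) : (Fin.t n -> R) -> R :=
  match n return (Fin.t n -> R) -> R with
  | O => fun _ => 0
  | S m => fun f => Rmax (f Fin.F1) (fmax m (fun i => f (Fin.FS i)))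
  end.

Definition vzero {p} : Rp p := fun _ => 0.
Definition vadd {p} (a b : Rp p) : Rp p := fun i => a i + b i.
Definition vopp {p} (a : Rp p) : Rp p := fun i => - a i.
Definition vscal {p} (t : R) (a : Rp p) : Rp p := fun i => t * a i.
Definition vnorm {p} (a : Rp p) : R := fmax p (fun i => Rabs (a i)).
Definition vdist {p} (a b : Rp p) : R := vnorm (vadd a (vopp b)).

Section Generic.
Context {V : Type} (d : V -> V -> R).

Definition is_open (U : V -> Prop) : Prop :=
  forall z, U z -> exists eps, 0 < eps /\ forall z', d z z' < eps -> U z'.

Definition closure (A : V -> Prop) : V -> Prop :=
  fun z => forall eps, 0 < eps -> exists a, A a /\ d z a < eps.

Definition is_closed (A : V -> Prop) : Prop :=
  forall z, closure A z -> A z.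

Definition is_compact (S : V -> Prop) : Prop :=
  forall (I : Type) (U : I -> V -> Prop),
    (forall i, is_open (U i)) ->
    (forall z, S z -> exists i, U i z) ->
    exists l : list I, forall z, S z -> exists i, List.In i l /\ U i z.

Context (add : V -> V -> V) (scal : R -> V -> V).

Definition tcone (S : V -> Prop) (z : V) : V -> Prop :=
  fun v => exists (h : nat -> R) (w : nat -> V),
    (forall n, 0 < h n) /\ Un_cv h 0 /\
    Un_cv (fun n => d (w n) v) 0 /\
    (forall n, S (add z (scal (h n) (w n)))).
End Generic.

Definition pdist (X : NormedSpace) {p} (a b : X * Rp p) : R :=
  ns_dist X (fst a) (fst b) + vdist (snd a) (snd b).
Definition padd (X : NormedSpace) {p} (a b : X * Rp p) : X * Rp p :=
  (ns_add X (fst a) (fst b), vadd (snd a) (snd b)).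
Definition pscal (X : NormedSpace) {p} (t : R) (a : X * Rp p) : X * Rp p :=
  (ns_scal X t (fst a), vscal t (snd a)).

Definition ordering_cone {p} (P : Rp p -> Prop) : Prop :=
  P vzero /\
  is_closed vdist P /\
  (forall t a, 0 <= t -> P a -> P (vscal t a)) /\
  (forall a b, P a -> P b -> P (vadd a b)) /\
  (forall a, P a -> P (vopp a) -> a = vzero) /\
  (exists c eps, 0 < eps /\ forall a, vdist a c < eps -> P a).

Definition msum {p} (S P : Rp p -> Prop) : Rp p -> Prop :=
  fun y => exists a q, S a /\ P q /\ y = vadd a q.

Definition Emin {p} (S P : Rp p -> Prop) : Rp p -> Prop :=
  fun y => S y /\
    forall z, ((exists q, P q /\ z = vadd y (vopp q)) /\ S z) <-> z = y.

Definition PEmin {p} (S P : Rp p -> Prop) : Rp p -> Prop :=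
  fun y => Emin S P y /\
    forall v, (tcone vdist vadd vscal (msum S P) y v /\ P (vopp v)) <-> v = vzero.

Definition Fup {X : NormedSpace} {p} (F : X -> Rp p -> Prop) (P : Rp p -> Prop)
  : X -> Rp p -> Prop := fun x => msum (F x) P.

Definition gph {X : NormedSpace} {p} (F : X -> Rp p -> Prop) : X * Rp p -> Prop :=
  fun z => F (fst z) (snd z).

Definition lipschitz_around {X : NormedSpace} {p} (F : X -> Rp p -> Prop) (x : X) : Prop :=
  exists l delta, 0 < l /\ 0 < delta /\
    forall x1 x2, ns_dist X x1 x < delta -> ns_dist X x2 x < delta ->
      forall y1, F x1 y1 -> exists y2 b, F x2 y2 /\ vnorm b <= 1 /\
        y1 = vadd y2 (vscal (l * ns_dist X x1 x2) b).

Definition DF {X : NormedSpace} {p} (F : X -> Rp p -> Prop) (x : X) (y : Rp p) (v : X)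
  : Rp p -> Prop :=
  fun w => tcone (pdist X) (padd X) (pscal X) (gph F) (x, y) (v, w).

Definition Dup {X : NormedSpace} {p} (F : X -> Rp p -> Prop) (P : Rp p -> Prop)
  (x : X) (y : Rp p) (v : X) : Rp p -> Prop :=
  Emin (DF (Fup F P) x y v) P.

(** Write T for the graph of v ↦ DF_↑((x,y);v), i.e. the contingent cone of gph F_↑
    at (x,y).  The proof rests on two facts about T:
    - T is closed, as is every contingent cone ([tcone_closed]);
    - T is stable under adding P to the second component, because gph F_↑ is
      ([tcone_Fup_add_cone]).
    The hypothesis provides a = -q with q ∈ P and a in the closure of the sets
    w + D_↑F((x,y);v), (v,w) ∈ S; since D_↑F ⊆ DF_↑, the points of S come arbitrarily
    close to G = {(v,w) : (v, a - w) ∈ T}.  Compactness of S yields (v,w) ∈ S in the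
    closure of G ([compact_meets_closure]); as (v,w) ↦ (v, a - w) is an isometry,
    (v, a - w) lies in the closure of T, hence in T, and adding q ∈ P gives
    (v, -w) ∈ T. *)
From Stdlib Require Import Reals.
Open Scope R_scope.
From Stdlib Require Import Lra Lia List Classical ClassicalEpsilon FunctionalExtensionality.

Lemma fmax_ge (n : nat) (f : Fin.t n -> R) (i : Fin.t n) : f i <= fmax n f.
Proof.
  revert f; induction i as [|n i IH]; intros f; simpl.
  - apply Rmax_l.
  - eapply Rle_trans; [apply (IH (fun j => f (Fin.FS j))) | apply Rmax_r].
Qed.

Lemma fmax_le (n : nat) (f : Fin.t n -> R) (c : R) :
  0 <= c -> (forall i, f i <= c) -> fmax n f <= c.
Proof.
  revert f; induction n as [|n IH]; intros f Hc Hf; simpl; auto.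
  apply Rmax_lub; auto.
Qed.

Lemma vnorm_comp {p} (a : Rp p) (i : Fin.t p) : Rabs (a i) <= vnorm a.
Proof. apply (fmax_ge p (fun i => Rabs (a i))). Qed.

Lemma vnorm_le {p} (a : Rp p) (c : R) :
  0 <= c -> (forall i, Rabs (a i) <= c) -> vnorm a <= c.
Proof. apply fmax_le. Qed.

Lemma vnorm_nonneg {p} (a : Rp p) : 0 <= vnorm a.
Proof.
  destruct p as [|p]; [unfold vnorm; simpl; lra |].
  eapply Rle_trans; [apply Rabs_pos | apply (vnorm_comp a Fin.F1)].
Qed.

Lemma vnorm_ext {p} (a b : Rp p) :
  (forall i, Rabs (a i) = Rabs (b i)) -> vnorm a = vnorm b.
Proof. intros H; unfold vnorm; f_equal; extensionality i; auto. Qed.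

Lemma vdist_refl {p} (a : Rp p) : vdist a a = 0.
Proof.
  apply Rle_antisym; [| apply vnorm_nonneg].
  apply vnorm_le; [lra |]; intros i; unfold vadd, vopp.
  rewrite Rplus_opp_r, Rabs_R0; lra.
Qed.

Lemma vdist_sym {p} (a b : Rp p) : vdist a b = vdist b a.
Proof.
  apply vnorm_ext; intros i; unfold vadd, vopp.
  rewrite <- Rabs_Ropp; f_equal; ring.
Qed.

Lemma vdist_tri {p} (a b c : Rp p) : vdist a c <= vdist a b + vdist b c.
Proof.
  unfold vdist; apply vnorm_le.
  - pose proof (vnorm_nonneg (vadd a (vopp b))).
    pose proof (vnorm_nonneg (vadd b (vopp c))); lra.
  - intros i.
    pose proof (vnorm_comp (vadd a (vopp b)) i).
    pose proof (vnorm_comp (vadd b (vopp c)) i).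
    unfold vadd, vopp in *.
    replace (a i + - c i) with ((a i + - b i) + (b i + - c i)) by ring.
    eapply Rle_trans; [apply Rabs_triang | lra].
Qed.

Section NormedSpaceFacts.
Variable X : NormedSpace.
Notation add := (ns_add X).
Notation opp := (ns_opp X).
Notation scal := (ns_scal X).
Notation zero := (ns_zero X).
Notation norm := (ns_norm X).

Lemma ns_scal_zero (a : X) : scal 0 a = zero.
Proof.
  assert (E : scal 0 a = add (scal 0 a) (scal 0 a)).
  { rewrite <- ns_scal_distr_r; f_equal; ring. }
  transitivity (add (scal 0 a) (add (scal 0 a) (opp (scal 0 a)))).
  - rewrite ns_add_opp, ns_add_zero; reflexivity.
  - rewrite ns_add_assoc, <- E, ns_add_opp; reflexivity.
Qed.

Lemma ns_opp_scal (a : X) : opp a = scal (-1) a.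
Proof.
  assert (E : add (scal (-1) a) a = zero).
  { rewrite <- (ns_scal_one X a) at 2; rewrite <- ns_scal_distr_r.
    replace (-1 + 1) with 0 by ring; apply ns_scal_zero. }
  rewrite <- (ns_add_zero X (scal (-1) a)), <- (ns_add_opp X a).
  rewrite ns_add_assoc, E, ns_add_comm, ns_add_zero; reflexivity.
Qed.

Lemma ns_norm_opp (a : X) : norm (opp a) = norm a.
Proof.
  rewrite ns_opp_scal, ns_norm_scal.
  replace (Rabs (-1)) with 1; [ring | unfold Rabs; destruct Rcase_abs; lra].
Qed.

Lemma ns_norm_zero : norm zero = 0.
Proof. rewrite <- (ns_scal_zero zero), ns_norm_scal, Rabs_R0; ring. Qed.

Lemma ns_norm_nonneg (a : X) : 0 <= norm a.
Proof.
  pose proof (ns_norm_triangle X a (opp a)) as H.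
  rewrite ns_add_opp, ns_norm_zero, ns_norm_opp in H; lra.
Qed.

Lemma ns_dist_refl (a : X) : ns_dist X a a = 0.
Proof. unfold ns_dist; rewrite ns_add_opp; apply ns_norm_zero. Qed.

Lemma ns_dist_sym (a b : X) : ns_dist X a b = ns_dist X b a.
Proof.
  unfold ns_dist; rewrite <- ns_norm_opp; f_equal.
  rewrite !ns_opp_scal, ns_scal_distr_l, ns_scal_assoc.
  replace (-1 * -1) with 1 by ring.
  rewrite ns_scal_one, ns_add_comm; reflexivity.
Qed.

Lemma ns_dist_tri (a b c : X) : ns_dist X a c <= ns_dist X a b + ns_dist X b c.
Proof.
  unfold ns_dist.
  replace (add a (opp c)) with (add (add a (opp b)) (add b (opp c))).
  - apply ns_norm_triangle.
  - rewrite ns_add_assoc, <- (ns_add_assoc X a), (ns_add_comm X (opp b) b).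
    rewrite ns_add_opp, ns_add_zero; reflexivity.
Qed.

End NormedSpaceFacts.

Lemma pdist_refl (X : NormedSpace) (p : nat) (a : X * Rp p) : pdist X a a = 0.
Proof. unfold pdist; rewrite ns_dist_refl, vdist_refl; ring. Qed.

Lemma pdist_nonneg (X : NormedSpace) (p : nat) (a b : X * Rp p) : 0 <= pdist X a b.
Proof.
  unfold pdist, ns_dist, vdist.
  pose proof (ns_norm_nonneg X (ns_add X (fst a) (ns_opp X (fst b)))).
  pose proof (vnorm_nonneg (vadd (snd a) (vopp (snd b)))); lra.
Qed.

Lemma pdist_sym (X : NormedSpace) (p : nat) (a b : X * Rp p) : pdist X a b = pdist X b a.
Proof. unfold pdist; rewrite ns_dist_sym, vdist_sym; reflexivity. Qed.

Lemma pdist_tri (X : NormedSpace) (p : nat) (a b c : X * Rp p) :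
  pdist X a c <= pdist X a b + pdist X b c.
Proof.
  unfold pdist.
  pose proof (ns_dist_tri X (fst a) (fst b) (fst c)).
  pose proof (vdist_tri (snd a) (snd b) (snd c)); lra.
Qed.

Lemma cv_harmonic_bound (u : nat -> R) (c : R) :
  (forall k, 0 <= u k /\ u k < c * / INR (S k)) -> Un_cv u 0.
Proof.
  intros H eps He.
  destruct (INR_archimed eps (Rabs c) He) as [N HN].
  exists N; intros n Hn; unfold R_dist; rewrite Rminus_0_r.
  destruct (H n) as [H1 H2]; rewrite Rabs_right by lra.
  assert (INR N <= INR n) by (apply le_INR; lia).
  assert (HS : 0 < INR (S n)) by (apply lt_0_INR; lia).
  rewrite S_INR in *.
  assert (Rabs c < (INR n + 1) * eps) by nra.
  apply Rlt_le_trans with (c * / (INR n + 1)); auto.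
  apply Rmult_le_reg_r with (INR n + 1); [lra |].
  rewrite Rmult_assoc, Rinv_l by lra.
  pose proof (Rle_abs c); lra.
Qed.

Lemma list_pos_lower_bound {V} (l : list (V * R)) :
  exists m, 0 < m /\ forall i, In i l -> 0 < snd i -> m <= snd i.
Proof.
  induction l as [|[c r] l [m [Hm H]]].
  - exists 1; split; [lra | intros i []].
  - destruct (Rlt_dec 0 r) as [Hr | Hr].
    + exists (Rmin r m); split; [apply Rmin_pos; auto |].
      intros i [<- | Hi] Hp; simpl in *; [apply Rmin_l |].
      eapply Rle_trans; [apply Rmin_r | auto].
    + exists m; split; auto.
      intros i [<- | Hi] Hp; simpl in *; [lra | auto].
Qed.

(** If a compact set S comes arbitrarily close to a set G, then some point of S
    lies in the closure of G: otherwise each z ∈ S has a ball of radius r_z/2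
    avoiding the r_z-neighbourhood of G, and a finite subcover bounds the distance
    from S to G away from 0. *)
Lemma compact_meets_closure {V} (d : V -> V -> R)
  (d_tri : forall a b c, d a c <= d a b + d b c) (d_refl : forall a, d a a = 0)
  (S G : V -> Prop) :
  is_compact d S ->
  (forall eps, 0 < eps -> exists z g, S z /\ G g /\ d z g < eps) ->
  exists z, S z /\ closure d G z.
Proof.
  intros Hcomp Hnear; apply NNPP; intro Hno.
  assert (Hsep : forall z, S z -> exists r, 0 < r /\ forall g, G g -> r <= d z g).
  { intros z Sz; apply NNPP; intro Hr; apply Hno; exists z; split; auto.
    intros eps He; apply NNPP; intro Hg; apply Hr; exists eps; split; auto.
    intros g Gg; apply Rnot_lt_le; intro Hl; apply Hg; eauto. }
  set (U := fun (i : V * R) z' => S (fst i) /\ 0 < snd i /\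
         (forall g, G g -> snd i <= d (fst i) g) /\ d (fst i) z' < snd i / 2).
  destruct (Hcomp (V * R)%type U) as [l Hl].
  - intros [c r] z' [H1 [H2 [H3 H4]]]; simpl in *.
    exists (r / 2 - d c z'); split; [lra |].
    intros z'' Hd; repeat split; auto; simpl.
    pose proof (d_tri c z' z''); lra.
  - intros z Sz; destruct (Hsep z Sz) as [r [Hr Hg]]; exists (z, r).
    repeat split; auto; simpl; rewrite d_refl; lra.
  - destruct (list_pos_lower_bound l) as [m [Hm Hmin]].
    destruct (Hnear (m / 2)) as [z' [g [Sz' [Gg Hd]]]]; [lra |].
    destruct (Hl z' Sz') as [[c r] [Hi [_ [Hr [Hsepc Hcz]]]]]; simpl in *.
    pose proof (Hmin _ Hi Hr); pose proof (Hsepc g Gg); pose proof (d_tri c z' g).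
    simpl in *; lra.
Qed.

Lemma closure_isometry_preimage {V} (d : V -> V -> R) (f : V -> V) (T : V -> Prop) :
  (forall a b, d (f a) (f b) = d a b) ->
  forall z, closure d (fun g => T (f g)) z -> closure d T (f z).
Proof.
  intros Hiso z Hz eps He.
  destruct (Hz eps He) as [g [Tg Hd]].
  exists (f g); rewrite Hiso; auto.
Qed.

(** Contingent cones are closed: a diagonal argument picks, for each k, a direction
    within 1/(k+1) of v, and along its defining sequence a step smaller than 1/(k+1)
    whose direction is within 1/(k+1) of it. *)
Lemma tcone_closed {V} (d : V -> V -> R) (add : V -> V -> V) (scal : R -> V -> V)
  (d_nonneg : forall a b, 0 <= d a b) (d_sym : forall a b, d a b = d b a)
  (d_tri : forall a b c, d a c <= d a b + d b c) (A : V -> Prop) (z : V) :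
  is_closed d (tcone d add scal A z).
Proof.
  intros v Hv.
  assert (Hstep : forall k : nat, exists tw : R * V,
            0 < fst tw /\ fst tw < / INR (S k) /\ d (snd tw) v < 2 * / INR (S k) /\
            A (add z (scal (fst tw) (snd tw)))).
  { intros k; set (e := / INR (S k)).
    assert (He : 0 < e) by (apply Rinv_0_lt_compat, lt_0_INR; lia).
    destruct (Hv e He) as [v' [[h [w [Hh [Hh0 [Hw HA]]]]] Hvv']].
    destruct (Hh0 e He) as [N1 HN1]; destruct (Hw e He) as [N2 HN2].
    set (n := max N1 N2).
    specialize (HN1 n ltac:(lia)); specialize (HN2 n ltac:(lia)).
    unfold R_dist in HN1, HN2; rewrite Rminus_0_r in HN1, HN2.
    pose proof (Rle_abs (h n)); pose proof (Rle_abs (d (w n) v')).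
    pose proof (d_tri (w n) v' v); rewrite (d_sym v' v) in *.
    exists (h n, w n); simpl; repeat split; auto; lra. }
  destruct (choice _ Hstep) as [tw Htw].
  exists (fun k => fst (tw k)), (fun k => snd (tw k)); repeat split.
  - intros k; apply Htw.
  - apply (cv_harmonic_bound _ 1); intros k; destruct (Htw k) as [H1 [H2 _]]; lra.
  - apply (cv_harmonic_bound _ 2); intros k; split; [apply d_nonneg | apply Htw].
  - intros k; apply Htw.
Qed.

(** For a convex cone P, gph F_↑ is stable under adding P to the second component,
    and so is its contingent cone at any point: DF_↑((x,y);v) + P ⊆ DF_↑((x,y);v). *)
Lemma tcone_Fup_add_cone (X : NormedSpace) (p : nat) (P : Rp p -> Prop)
  (F : X -> Rp p -> Prop) (x : X) (y : Rp p) (v : X) (u q : Rp p) :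
  (forall t a, 0 <= t -> P a -> P (vscal t a)) ->
  (forall a b, P a -> P b -> P (vadd a b)) ->
  P q -> DF (Fup F P) x y v u -> DF (Fup F P) x y v (vadd u q).
Proof.
  intros Pscal Padd Pq [h [w [Hh [Hh0 [Hw Hgph]]]]].
  exists h, (fun n => (fst (w n), vadd (snd (w n)) q)); repeat split; auto.
  - eapply Un_cv_ext; [| exact Hw]; intros n; unfold pdist; simpl.
    f_equal; apply vnorm_ext; intros i; unfold vadd, vopp; f_equal; ring.
  - intros n; destruct (Hgph n) as [b [r [Fb [Pr Eb]]]].
    exists b, (vadd r (vscal (h n) q)); repeat split; auto.
    + apply Padd; auto; apply Pscal; auto; left; apply Hh.
    + simpl in *; extensionality i; apply equal_f with i in Eb.
      unfold vadd, vscal in *; rewrite Rmult_plus_distr_l; lra.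
Qed.

Theorem proposition6p9 (X : NormedSpace) (p : nat) (P : Rp p -> Prop)
  (F : X -> Rp p -> Prop) (x : X) (y : Rp p) (S : X * Rp p -> Prop) :
  ordering_cone P ->
  F x y ->
  lipschitz_around F x ->
  PEmin (F x) P y ->
  (exists z, S z) ->
  is_compact (pdist X) S ->
  msum (Emin (closure vdist
          (fun z => exists v w u, S (v, w) /\ Dup F P x y v u /\ z = vadd w u)) P)
       P vzero ->
  exists v w, S (v, w) /\ DF (Fup F P) x y v (vopp w).
Proof.
  intros [_ [_ [Pscal [Padd _]]]] _ _ _ _ Hcomp [a [q [[Ha _] [Pq Eaq]]]].
  set (T := tcone (pdist X) (padd X) (pscal X) (gph (Fup F P)) (x, y)).
  set (reflect_a := fun z : X * Rp p => (fst z, vadd a (vopp (snd z)))).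
  assert (Hiso : forall z z', pdist X (reflect_a z) (reflect_a z') = pdist X z z').
  { intros z z'; unfold pdist; simpl; f_equal.
    apply vnorm_ext; intros i; unfold vadd, vopp; rewrite <- Rabs_Ropp; f_equal; ring. }
  assert (Hnear : forall eps, 0 < eps -> exists z g,
            S z /\ T (reflect_a g) /\ pdist X z g < eps).
  { intros eps He; destruct (Ha eps He) as [a' [[v [w [u [Svw [[Du _] ->]]]]] Hd]].
    exists (v, w), (v, vadd a (vopp u)); repeat split; auto.
    - unfold reflect_a; simpl.
      replace (vadd a (vopp (vadd a (vopp u)))) with u; [exact Du |].
      extensionality i; unfold vadd, vopp; ring.
    - unfold pdist; simpl; rewrite ns_dist_refl, vdist_sym.
      replace (vdist (vadd a (vopp u)) w) with (vdist a (vadd w u)); [lra |].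
      apply vnorm_ext; intros i; unfold vadd, vopp; f_equal; ring. }
  destruct (compact_meets_closure (pdist X) (pdist_tri X p) (pdist_refl X p) S _
              Hcomp Hnear) as [[v w] [Svw Hcl]].
  assert (Tvw : T (reflect_a (v, w))).
  { apply tcone_closed; [apply pdist_nonneg | apply pdist_sym | apply pdist_tri |].
    exact (closure_isometry_preimage _ _ _ Hiso _ Hcl). }
  exists v, w; split; auto.
  replace (vopp w) with (vadd (vadd a (vopp w)) q).
  - exact (tcone_Fup_add_cone X p P F x y v _ q Pscal Padd Pq Tvw).
  - extensionality i; apply equal_f with i in Eaq; unfold vzero, vadd, vopp in *; lra.
Qed.
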